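(* Let $(A,\mu)$ be an associative algebra over a field $k$, $\alpha:A\to A$ an algebra endomorphism, and $T:A\otimes A\to A\otimes A$, $\tilde T_1,\tilde T_2:A\otimes A\otimes A\to A\otimes A\otimes A$ linear maps satisfying $(\alpha\otimes\alpha)\circ T=T\circ(\alpha\otimes\alpha)$, $T\circ(\mathrm{id}_A\otimes\mu)=(\mathrm{id}_A\otimes\mu)\circ\tilde T_1\circ(T\otimes\mathrm{id}_A)$, $T\circ(\mu\otimes\mathrm{id}_A)=(\mu\otimes\mathrm{id}_A)\circ\tilde T_2\circ(\mathrm{id}_A\otimes T)$, $\tilde T_1\circ(T\otimes\mathrm{id}_A)\circ(\alpha\otimes T)=\tilde T_2\circ(\mathrm{id}_A\otimes T)\circ(T\otimes\alpha)$. Then $(A,\mu\circ T,\alpha)$ is a Hom-associative algebra.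
   Context: Algebras are not assumed unital. A Hom-associative algebra is a triple $(A,\mu,\alpha)$ with $\mu(a\otimes a')=aa'$ and $\alpha$ linear such that $\alpha(aa')=\alpha(a)\alpha(a')$ and $\alpha(a)(a'a'')=(aa')\alpha(a'')$ for all $a,a',a''\in A$. *)

From HB Require Import structures.
From mathcomp Require Import all_boot all_algebra.
Set Implicit Arguments. Unset Strict Implicit. Unset Printing Implicit Defensive.
Import GRing.Theory.
Local Open Scope ring_scope.

Definition lin (K : fieldType) (U V : lmodType K) (f : U -> V) : Prop :=
  forall (a : K) (u v : U), f (a *: u + v) = a *: f u + f v.

Definition bilin (K : fieldType) (U W V : lmodType K) (f : U -> W -> V) : Prop :=
  (forall w, lin (fun u => f u w)) /\ (forall u, lin (f u)).

Definition is_tensor (K : fieldType) (U W V : lmodType K) (t : U -> W -> V) : Prop :=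
  bilin t /\
  forall (X : lmodType K) (f : U -> W -> X), bilin f ->
    exists g : V -> X, [/\ lin g, (forall u w, g (t u w) = f u w) &
      forall g' : V -> X, lin g' -> (forall u w, g' (t u w) = f u w) ->
        forall v, g' v = g v].

Definition assoc_alg (K : fieldType) (A : lmodType K) (mul : A -> A -> A) : Prop :=
  bilin mul /\ forall a b c, mul a (mul b c) = mul (mul a b) c.

Definition hom_assoc_alg (K : fieldType) (A : lmodType K)
    (mul : A -> A -> A) (alpha : A -> A) : Prop :=
  [/\ bilin mul, lin alpha,
      (forall a b, alpha (mul a b) = mul (alpha a) (alpha b)) &
      forall a b c, mul (alpha a) (mul b c) = mul (mul a b) (alpha c)].

From mathcomp Require Import all_boot all_algebra.
Set Implicit Arguments. Unset Strict Implicit.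

(* The twisted product is [mu \o T \o t2].  Its multiplicativity for alpha is
   the compatibility [aa \o T = T \o aa] combined with the multiplicativity of
   [mu].  For Hom-associativity, the two twisting laws move [T] past [idmu] and
   [mu_id], after which the compatibility of [T1] and [T2] and the associativity
   of [mu] on A ⊗ A ⊗ A identify both sides.  All identities between linear maps
   are checked on pure tensors, which determine them by the universal property. *)

Section LinearMaps.

Variable K : fieldType.

Lemma lin_comp (U V W : lmodType K) (f : V -> W) (g : U -> V) :
  lin f -> lin g -> lin (fun x => f (g x)).
Proof. by move=> hf hg a u v; rewrite hg hf. Qed.

Lemma bilin_comp (U W V X : lmodType K) (f : V -> X) (t : U -> W -> V) :
  lin f -> bilin t -> bilin (fun u w => f (t u w)).
Proof. by move=> lf [tl tr]; split=> [w|u]; apply: lin_comp. Qed.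

Lemma tensor_lin_ext (U W V X : lmodType K) (t : U -> W -> V) (g1 g2 : V -> X) :
  is_tensor t -> lin g1 -> lin g2 ->
  (forall u w, g1 (t u w) = g2 (t u w)) -> forall v, g1 v = g2 v.
Proof.
move=> [bt univ] l1 l2 e v.
have [g [_ _ g_uniq]] := univ _ _ (bilin_comp l1 bt).
by rewrite (g_uniq g1 l1 (fun _ _ => erefl)) (g_uniq g2 l2 (fun u w => esym (e u w))).
Qed.

Lemma tensor3_lin_ext (A A2 A3 X : lmodType K) (t2 : A -> A -> A2)
    (t3 : A2 -> A -> A3) (g1 g2 : A3 -> X) :
  is_tensor t2 -> is_tensor t3 -> lin g1 -> lin g2 ->
  (forall a b c, g1 (t3 (t2 a b) c) = g2 (t3 (t2 a b) c)) -> forall z, g1 z = g2 z.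
Proof.
move=> tt2 tt3 l1 l2 e; apply: (tensor_lin_ext tt3) => // x c; move: x.
have lt3 := tt3.1.1 c.
by apply: (tensor_lin_ext tt2) => //; apply: lin_comp.
Qed.

End LinearMaps.

Section TensorMultiplication.

Variables (K : fieldType) (A A2 A3 : lmodType K) (mul : A -> A -> A).
Variables (t2 : A -> A -> A2) (mu : A2 -> A).
Hypotheses (tt2 : is_tensor t2) (lmu : lin mu) (muE : forall a b, mu (t2 a b) = mul a b).

Lemma mu_morph (alpha : A -> A) (aa : A2 -> A2) :
  lin alpha -> (forall a b, alpha (mul a b) = mul (alpha a) (alpha b)) ->
  lin aa -> (forall a b, aa (t2 a b) = t2 (alpha a) (alpha b)) ->
  forall x, alpha (mu x) = mu (aa x).
Proof.
move=> lal almul laa aaE.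
apply: (tensor_lin_ext tt2); try exact: lin_comp.
by move=> a b; rewrite aaE !muE almul.
Qed.

Lemma mu_assoc3 (t3l : A2 -> A -> A3) (t3r : A -> A2 -> A3)
    (idmu mu_id : A3 -> A2) :
  (forall a b c, mul a (mul b c) = mul (mul a b) c) ->
  is_tensor t3l -> (forall a b c, t3r a (t2 b c) = t3l (t2 a b) c) ->
  lin idmu -> (forall a x, idmu (t3r a x) = t2 a (mu x)) ->
  lin mu_id -> (forall x c, mu_id (t3l x c) = t2 (mu x) c) ->
  forall z, mu (idmu z) = mu (mu_id z).
Proof.
move=> massoc tt3 t3rE lidmu idmuE lmu_id mu_idE.
apply: (tensor3_lin_ext tt2 tt3); try exact: lin_comp.
by move=> a b c; rewrite -t3rE idmuE t3rE mu_idE !muE massoc.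
Qed.

End TensorMultiplication.

Theorem theorem4p1 (K : fieldType) (A A2 A3 : lmodType K)
  (mul : A -> A -> A) (alpha : A -> A)
  (t2 : A -> A -> A2) (t3l : A2 -> A -> A3) (t3r : A -> A2 -> A3)
  (mu : A2 -> A) (T : A2 -> A2) (T1 T2 : A3 -> A3)
  (aa : A2 -> A2) (Tid idT : A3 -> A3) (idmu mu_id : A3 -> A2)
  (alT Tal : A3 -> A3) :
  assoc_alg mul ->
  lin alpha -> (forall a b, alpha (mul a b) = mul (alpha a) (alpha b)) ->
  is_tensor t2 -> is_tensor t3l ->
  bilin t3r -> (forall a b c, t3r a (t2 b c) = t3l (t2 a b) c) ->
  lin mu -> (forall a b, mu (t2 a b) = mul a b) ->
  lin T -> lin T1 -> lin T2 ->
  lin aa -> (forall a b, aa (t2 a b) = t2 (alpha a) (alpha b)) ->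
  lin Tid -> (forall x c, Tid (t3l x c) = t3l (T x) c) ->
  lin idT -> (forall a x, idT (t3r a x) = t3r a (T x)) ->
  lin idmu -> (forall a x, idmu (t3r a x) = t2 a (mu x)) ->
  lin mu_id -> (forall x c, mu_id (t3l x c) = t2 (mu x) c) ->
  lin alT -> (forall a x, alT (t3r a x) = t3r (alpha a) (T x)) ->
  lin Tal -> (forall x c, Tal (t3l x c) = t3l (T x) (alpha c)) ->
  (forall x, aa (T x) = T (aa x)) ->
  (forall z, T (idmu z) = idmu (T1 (Tid z))) ->
  (forall z, T (mu_id z) = mu_id (T2 (idT z))) ->
  (forall z, T1 (Tid (alT z)) = T2 (idT (Tal z))) ->
  hom_assoc_alg (fun a b => mu (T (t2 a b))) alpha.
Proof.
move=> [_ massoc] lal almul tt2 tt3 _ t3rE lmu muE lT _ _ laa aaE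
  _ TidE _ idTE lidmu idmuE lmu_id mu_idE _ alTE _ TalE
  aaT T_idmu T_mu_id T1_T2.
have alpha_mu := mu_morph tt2 lmu muE lal almul laa aaE.
have mu_assoc := mu_assoc3 tt2 lmu muE massoc tt3 t3rE lidmu idmuE lmu_id mu_idE.
split.
- exact: bilin_comp (lin_comp lmu lT) tt2.1.
- exact: lal.
- by move=> a b; rewrite alpha_mu aaT aaE.
- move=> a b c.
  rewrite -idmuE -alTE t3rE T_idmu T1_T2 mu_assoc.
  by rewrite -mu_idE -TalE T_mu_id.
Qed.
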